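(* Let $\mathcal H$ be a cycle-reset SHS. Then $\mathcal T_{\mathcal H}$ is decisive with respect to every measurable set $B\in\Sigma_{\mathcal H}$.
   Context: Stochastic hybrid system (SHS) with $n$ variables: a finite set $L$ of locations; a finite set $E$ of edges $e=(\ell,a,\ell')$; for each $\ell$ an invariant $\mathrm{Inv}(\ell)\subseteq\mathbb R^n$ and a flow $\gamma_\ell:\mathbb R^n\times\mathbb R^+\to\mathbb R^n$; for each edge $e$ a guard $\mathcal G(e)\subseteq\mathbb R^n$ and a reset map $\mathbf v\mapsto\mathcal R_e(\mathbf v)\subseteq\mathbb R^n$. States $S_{\mathcal H}=L\times\mathbb R^n$ with $\sigma$-algebra $\Sigma_{\mathcal H}$ (product of discrete and Borel); $s+\tau=(\ell,\gamma_\ell(\mathbf v,\tau))$ for $s=(\ell,\mathbf v)$; $e$ enabled in $(\ell,\mathbf v)$ if $\mathbf v\in\mathcal G(e)$. $I(s)$ is the set of $\tau\ge0$ such that the trajectory stays in $\mathrm{Inv}(\ell)$ on $[0,\tau]$ and some edge is enabled at $s+\tau$ (assumed nonempty). Probabilistic data: delay distributions $\mu_s$ on $\mathbb R^+$ with $\mu_s(I(s))=1$; edge distributions $w_{s'}$ giving positive probability exactly to edges enabled in $s'$; reset distributions $\eta_e(\mathbf v)$ with $\eta_e(\mathbf v)(\mathcal R_e(\mathbf v))=1$. The STS $\mathcal T_{\mathcal H}$ has kernel $\kappa((\ell,\mathbf v),\{\ell'\}\times D)=\int\sum_{e=(\ell,a,\ell')}w_{s+\tau}(e)\,\eta_e(\gamma_\ell(\mathbf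 v,\tau))(D)\,d\mu_s(\tau)$. An edge $e$ is strongly reset if $\eta_e(\mathbf v)$ does not depend on $\mathbf v$; its common value is denoted $\eta^*_e$. $\mathcal H$ is cycle-reset if every cycle of the directed graph on $L$ with an arc $\ell\to\ell'$ whenever some edge $(\ell,a,\ell')\in E$ exists contains an arc $\ell\to\ell'$ such that all edges from $\ell$ to $\ell'$ are strongly reset. STS notions: $\mathbb P^{\mathcal T}_\mu$ induced probability on runs; $\widetilde B=\{s:\mathbb P_{\delta_s}(\mathbf F B)=0\}$; $\mathcal T$ is decisive w.r.t. $B$ if $\mathbb P^{\mathcal T}_\mu(\mathbf F B\vee\mathbf F\widetilde B)=1$ for every initial distribution $\mu$. *)

From HB Require Import structures.
From mathcomp Require Import all_boot all_order all_algebra.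
From mathcomp Require Import all_classical all_reals all_analysis.
Set Implicit Arguments. Unset Strict Implicit. Unset Printing Implicit Defensive.
Import Order.TTheory GRing.Theory Num.Theory.
Local Open Scope classical_set_scope.
Local Open Scope ring_scope.

Section sts.
Context {d : measure_display} {T : measurableType d} {R : realType}.
Variable k : R.-pker T ~> T.

(* reach_le k A n s = P_{delta_s}( F_{<= n} A ): probability of visiting A
   within the first n steps of the run started in s. *)
Fixpoint reach_le (A : set T) (m : nat) (s : T) : \bar R :=
  match m with
  | 0 => (\1_A s)%:E
  | m'.+1 => ((\1_A s)%:E + (\1_(~` A) s)%:E * \int[k s]_y reach_le A m' y)%E
  end.

Definition reach (A : set T) (s : T) : \bar R :=
  ereal_sup (range (fun m => reach_le A m s)).

Definition avoid_set (B : set T) : set T := [set s | reach B s = 0%E].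

(* decisiveness w.r.t. B: for every initial distribution mu,
   P_mu(F B \/ F B~) = P_mu(F (B u B~)) = 1 *)
Definition decisive (B : set T) : Prop :=
  forall mu : probability T R,
    (\int[mu]_s reach (B `|` avoid_set B) s = 1)%E.
End sts.

Section shs_graph.
Context {L : eqType} {Ed : finType} (src tgt : Ed -> L).

Definition loc_arc : rel L := fun l l' => [exists e, (src e == l) && (tgt e == l')].

(* every cycle l0 l1 ... lk = l0 (k >= 1) of the location graph contains an arc
   l_i -> l_{i+1} all of whose edges satisfy P (P = "is strongly reset") *)
Definition cycle_reset_for (P : Ed -> Prop) : Prop :=
  forall (x : L) (p : seq L), p != [::] -> path loc_arc x p -> last x p = x ->
    exists2 i, (i < size p)%N &
      forall e, src e = nth x (x :: p) i -> tgt e = nth x p i -> P e.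
End shs_graph.

From HB Require Import structures.
From mathcomp Require Import all_boot all_order all_algebra.
From mathcomp Require Import all_classical all_reals all_analysis.
From mathcomp Require Import measurable_realfun lra.
Import Order.TTheory GRing.Theory Num.Theory.
Local Open Scope classical_set_scope.
Local Open Scope ring_scope.

(* Let C = B u B~.  Every state lies in B~ or reaches B with positive
   probability, so the states reaching C within M steps with probability at
   least 1/(M+1) grow with M and exhaust the state space.  As there are finitely
   many edges, one M makes every reset distribution give mass at least 1/(M+1)
   to these states, and for a strongly reset edge this mass does not depend on
   the state the edge is taken from.  By the cycle-reset hypothesis the arcs
   that are not strongly reset form an acyclic graph, so a run avoiding
   strongly reset arcs visits pairwise distinct locations; induction along such
   runs gives a uniform bound delta > 0 on the probability of reaching C within
   N + M steps, N the number of locations.  Finally, a uniform positive chance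
   of reaching C makes the probability of avoiding it decay geometrically, so C
   is reached almost surely. *)

Lemma exists_expr_lt (R : realType) (q e : R) : 0 <= q < 1 -> 0 < e ->
  exists j, q ^+ j < e.
Proof.
move=> /andP[q0 q1] e0.
have := @cvg_expr R q; rewrite ger0_norm// => /(_ q1) /cvgrPdist_lt/(_ e e0)[N _ HN].
exists N; have := HN N (leqnn N).
by rewrite /= sub0r normrN ger0_norm// exprn_ge0.
Qed.

Lemma finite_forall_exists_nat (I : finType) (P : I -> nat -> Prop) :
  (forall i m m', (m <= m')%N -> P i m -> P i m') ->
  (forall i, exists m, P i m) -> exists m, forall i, P i m.
Proof.
move=> Pmono Pex; have [f Pf] := choice Pex.
by exists (\max_i f i) => i; apply: Pmono (Pf i); exact: leq_bigmax.
Qed.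

Lemma finite_set_uniq_size {T : choiceType} : finite_set [set: T] ->
  exists N, forall q : seq T, uniq q -> (size q <= N)%N.
Proof.
case/finite_seqP => s sT; exists (size (undup s)) => q uq.
apply: uniq_leq_size uq _ => x _.
by rewrite mem_undup; have : [set` s] x by rewrite -sT.
Qed.

Local Open Scope ereal_scope.

Lemma exists_inv_succ_le (R : realType) (x : \bar R) : 0 < x ->
  exists k : nat, (k.+1%:R^-1)%:E <= x.
Proof.
case: x => [r||]//; last by exists 0%N; rewrite leey.
rewrite lte_fin => /ltr_add_invr[k]; rewrite add0r => kr.
by exists k; rewrite lee_fin ltW.
Qed.

Section nonneg_integral.
Context {d} {T : measurableType d} {R : realType} (m : {measure set T -> \bar R}).
Import HBNNSimple.

(* No measurability is needed: for nonnegative functions the integral is the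
   supremum of the integrals of simple minorants. *)
Lemma ge0_le_integralT (F G : T -> \bar R) :
  (forall x, 0 <= F x) -> (forall x, F x <= G x) ->
  \int[m]_x F x <= \int[m]_x G x.
Proof.
move=> F0 FG; have G0 x : 0 <= G x by exact: le_trans (FG x).
rewrite !ge0_integralTE//; apply: ereal_sup_le => _ [h hF <-].
by exists h => //= x; exact: le_trans (hF x) (FG x).
Qed.

Lemma ge0_integralZl_le (F : T -> \bar R) (c : R) :
  (forall x, 0 <= F x) -> (0 <= c)%R ->
  c%:E * \int[m]_x F x <= \int[m]_x (c%:E * F x).
Proof.
move=> F0 c0; have cF0 x : 0 <= c%:E * F x by rewrite mule_ge0.
rewrite !ge0_integralTE// -ereal_supZl//; last first.
  by apply/set0P; exists (sintegral m (@nnsfun0 _ T R)); exists nnsfun0.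
apply: ereal_sup_le => _ [_ [h hF <-] <-]; exists (scale_nnsfun h c0).
  by move=> x /=; rewrite EFinM lee_wpmul2l ?lee_fin//; exact: hF.
by rewrite sintegralrM.
Qed.

Lemma ge0_integral_ge_level {f : T -> \bar R} {b : R} :
  (0 <= b)%R -> (forall x, 0 <= f x) -> measurable_fun [set: T] f ->
  b%:E * m [set x | b%:E <= f x] <= \int[m]_x f x.
Proof.
move=> b0 f0 mf; set H := [set x | _ <= _].
have mH : measurable H by rewrite -[H]setTI; exact: emeasurable_fun_c_infty.
rewrite -[H]setIT -integral_indic// -ge0_integralZl//; last first.
  exact/measurable_EFinP/measurable_indic.
apply: ge0_le_integral => //.
- by move=> x _; rewrite mule_ge0 ?lee_fin.
- by apply: emeasurable_funM => //; exact/measurable_EFinP/measurable_indic.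
move=> x _; rewrite indicE; have [/set_mem xH|_] := boolP (x \in H).
  by rewrite mule1.
by rewrite mule0.
Qed.

End nonneg_integral.

Lemma probability_cover_ge_inv d (T : measurableType d) (R : realType)
  (P : probability T R) (G : nat -> set T) :
  (forall M, measurable (G M)) -> {homo G : M M' / (M <= M')%N >-> M `<=` M'} ->
  \bigcup_M G M = [set: T] -> exists M, (M.+1%:R^-1)%:E <= P (G M).
Proof.
move=> mG Gnd GT; suff [M /exists_inv_succ_le[k Pk]] : exists M, 0 < P (G M).
  exists (maxn M k); apply: le_trans (le_measure _ _ _ (Gnd _ _ (leq_maxl M k))).
  - by apply: le_trans Pk; rewrite lee_fin lef_pV2 ?posrE// ler_nat ltnS leq_maxr.
  - exact: mem_set.
  - exact: mem_set.
apply: contrapT => /forallNP P0.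
have : P.-negligible (\bigcup_M G M).
  apply: negligible_bigcup => M; exists (G M); split => //.
  by apply/eqP; rewrite eq_le measure_ge0 andbT leNgt; apply/negP; exact: P0.
rewrite GT => -[A [mA A0 TA]].
have : P [set: T] <= P A by apply: le_measure; rewrite ?inE.
by rewrite probability_setT A0 lee_fin ler10.
Qed.

Section reachability.
Context {d : measure_display} {T : measurableType d} {R : realType}.
Variable k : R.-pker T ~> T.
Implicit Types (A C : set T) (s : T).

Lemma integral_pker1 s : \int[k s]_y (1 : \bar R) = 1.
Proof. by rewrite integral_cst// mul1e prob_kernel. Qed.

Lemma reach_le_ge0 A m s : 0 <= reach_le k A m s.
Proof.
elim: m s => [|m IH] s /=; first by rewrite lee_fin.
by rewrite adde_ge0 ?mule_ge0 ?lee_fin ?integral_ge0.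
Qed.

Lemma reach_le_in A m s : A s -> reach_le k A m s = 1.
Proof.
by move=> sA; case: m => [|m] /=; rewrite !indicE ?in_setC mem_set//= mul0e adde0.
Qed.

Lemma reach_le_notin A m s :
  ~ A s -> reach_le k A m.+1 s = \int[k s]_y reach_le k A m y.
Proof. by move=> sA /=; rewrite !indicE in_setC memNset//= add0e mul1e. Qed.

Lemma reach_le_le1 A m s : reach_le k A m s <= 1.
Proof.
elim: m s => [|m IH] s; first by rewrite /= lee_fin indicE; case: (_ \in _).
have [sA|sA] := pselect (A s); first by rewrite reach_le_in.
rewrite reach_le_notin// -[leRHS](integral_pker1 s).
by apply: ge0_le_integralT => // y; exact: reach_le_ge0.
Qed.

Lemma measurable_reach_le A m :
  measurable A -> measurable_fun [set: T] (reach_le k A m).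
Proof.
move=> mA; have mI (D : set T) :
    measurable D -> measurable_fun [set: T] (fun x => (\1_D x)%:E).
  by move=> mD; exact/measurable_EFinP/measurable_indic.
elim: m => [|m IH] /=; first exact: mI.
apply: emeasurable_funD; first exact: mI.
apply: emeasurable_funM; first exact/mI/measurableC.
apply: (measurable_fun_integral_kernel (l := k)) => // [U mU|y].
- exact: measurable_kernel.
- exact: reach_le_ge0.
Qed.

Lemma reach_le_nondecr A m m' s : (m <= m')%N -> reach_le k A m s <= reach_le k A m' s.
Proof.
elim: m' m s => [|m' IH] [|m] s // mm'.
- have [sA|sA] := pselect (A s); first by rewrite !reach_le_in.
  rewrite reach_le_notin// /= indicE memNset//= integral_ge0// => y _.
  exact: reach_le_ge0.
- have [sA|sA] := pselect (A s); first by rewrite !reach_le_in.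
  rewrite !reach_le_notin//; apply: ge0_le_integralT => [y|y]; first exact: reach_le_ge0.
  exact: IH.
Qed.

Lemma le_reach_le A A' m s : A `<=` A' -> reach_le k A m s <= reach_le k A' m s.
Proof.
move=> AA'; have [sA'|sA'] := pselect (A' s).
  by rewrite (reach_le_in _ _ _ sA') reach_le_le1.
have sA : ~ A s by move/AA'.
elim: m s sA sA' => [|m IH] s sA sA'; first by rewrite /= !indicE !memNset.
rewrite !reach_le_notin//; apply: ge0_le_integralT => [y|y]; first exact: reach_le_ge0.
have [yA'|yA'] := pselect (A' y); first by rewrite (reach_le_in _ _ _ yA') reach_le_le1.
by apply: IH => // /AA'.
Qed.

Lemma reach_le_le_reach A m s : reach_le k A m s <= reach k A s.
Proof. by apply: ereal_sup_ubound; exists m. Qed.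

Lemma reach_ge0 A s : 0 <= reach k A s.
Proof. exact: le_trans (reach_le_ge0 A 0 s) (reach_le_le_reach _ _ _). Qed.

Lemma reach_le1 A s : reach k A s <= 1.
Proof. by apply: ge_ereal_sup => _ [m _ <-]; exact: reach_le_le1. Qed.

Lemma measurable_avoid_set B : measurable B -> measurable (avoid_set k B).
Proof.
move=> mB; have mreach : measurable_fun [set: T] (reach k B).
  have := measurable_fun_esups (fun m => measurable_reach_le _ m mB) 0.
  congr measurable_fun; apply/funext => s; rewrite /esups /reach.
  by congr ereal_sup; apply/seteqP; split => _ [m _ <-]; exists m.
rewrite (_ : avoid_set k B = [set s | reach k B s <= 0]).
  by rewrite -[X in measurable X]setTI; exact: emeasurable_fun_infty_c.
apply/seteqP; split => s /=; first by move=> ->.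
by move=> s0; apply/eqP; rewrite eq_le s0 reach_ge0.
Qed.

Lemma reach_le_avoid_set_gt0 B s :
  exists m, 0 < reach_le k (B `|` avoid_set k B) m s.
Proof.
have [sB0|/eqP sB0] := pselect (reach k B s = 0).
  by exists 0%N; rewrite reach_le_in ?lte01//; right.
have /ereal_sup_gt[_ [m _ <-] Bm] : 0 < reach k B s by rewrite lt0e sB0 reach_ge0.
by exists m; apply: lt_le_trans Bm _; exact/le_reach_le/subsetUl.
Qed.

End reachability.

Section avoidance.
Context {d : measure_display} {T : measurableType d} {R : realType}.
Variable k : R.-pker T ~> T.
Variable C : set T.
Hypothesis mC : measurable C.

Fixpoint stay_out (m : nat) (s : T) : \bar R :=
  match m with
  | 0 => (\1_(~` C) s)%:E
  | m'.+1 => (\1_(~` C) s)%:E * \int[k s]_y stay_out m' y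
  end.

Lemma stay_out_ge0 m s : 0 <= stay_out m s.
Proof.
elim: m s => [|m IH] s /=; first by rewrite lee_fin.
by rewrite mule_ge0 ?lee_fin ?integral_ge0.
Qed.

Lemma stay_out_in m s : C s -> stay_out m s = 0.
Proof. by move=> Cs; case: m => [|m] /=; rewrite indicE in_setC mem_set//= ?mul0e. Qed.

Lemma stay_out_notin m s : ~ C s -> stay_out m.+1 s = \int[k s]_y stay_out m y.
Proof. by move=> Cs /=; rewrite indicE in_setC memNset//= mul1e. Qed.

Lemma measurable_stay_out m : measurable_fun [set: T] (stay_out m).
Proof.
have mI : measurable_fun [set: T] (fun x => (\1_(~` C) x : R)%:E).
  by apply/measurable_EFinP/measurable_indic; exact: measurableC.
elim: m => [|m IH] //=; apply: emeasurable_funM => //.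
apply: (measurable_fun_integral_kernel (l := k)) => // [U mU|y].
- exact: measurable_kernel.
- exact: stay_out_ge0.
Qed.

Lemma reach_le_stay_out m s : reach_le k C m s + stay_out m s = 1.
Proof.
elim: m s => [|m IH] s.
  by rewrite /= !indicE in_setC; case: (_ \in C); rewrite /= ?adde0 ?add0e.
have [Cs|Cs] := pselect (C s); first by rewrite reach_le_in// stay_out_in// adde0.
rewrite reach_le_notin// stay_out_notin// -ge0_integralD//.
- by rewrite (eq_integral (fun _ => 1)) ?integral_pker1// => y _; rewrite IH.
- by move=> y _; exact: reach_le_ge0.
- exact: measurable_reach_le.
- by move=> y _; exact: stay_out_ge0.
- exact: measurable_stay_out.
Qed.

Lemma stay_out_addn_le (q : R) b : (0 <= q)%R -> (forall y, stay_out b y <= q%:E) ->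
  forall a s, stay_out (a + b) s <= q%:E * stay_out a s.
Proof.
move=> q0 bq; elim=> [|a IH] s; have [Cs|Cs] := pselect (C s);
  do ?by rewrite !stay_out_in// mule0.
  by rewrite add0n /= indicE in_setC memNset//= mule1.
rewrite addSn !stay_out_notin// -ge0_integralZl//.
- by apply: ge0_le_integralT => // y; exact: stay_out_ge0.
- exact: measurable_stay_out.
- by move=> y _; exact: stay_out_ge0.
Qed.

Lemma stay_out_muln_le (q : R) b : (0 <= q)%R -> (forall y, stay_out b y <= q%:E) ->
  forall j s, stay_out (j * b) s <= (q ^+ j)%:E.
Proof.
move=> q0 bq; elim=> [|j IH] s.
  by rewrite mul0n expr0 /= lee_fin indicE; case: (_ \in _).
rewrite mulSnr (le_trans (stay_out_addn_le _ _ q0 bq _ _))// exprS EFinM.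
by apply: lee_wpmul2l; rewrite ?lee_fin.
Qed.

Lemma reach_eq1_of_unif_ge b (delta : R) : (0 < delta)%R ->
  (forall y, delta%:E <= reach_le k C b y) -> forall s, reach k C s = 1.
Proof.
move=> delta0 bdelta s; apply/eqP; rewrite eq_le reach_le1 /=.
have delta1 : (delta <= 1)%R.
  by rewrite -lee_fin (le_trans (bdelta s)) ?reach_le_le1.
have q0 : (0 <= 1 - delta)%R by rewrite subr_ge0.
have stay_b y : stay_out b y <= (1 - delta)%:E.
  have := reach_le_stay_out b y; have := bdelta y; have := stay_out_ge0 b y.
  case: (reach_le k C b y) => [r||]//; case: (stay_out b y) => [q||]//.
  by rewrite !lee_fin => ? ? [] ?; lra.
apply/lee_addgt0Pr => e e0.
have [j je] : exists j, ((1 - delta) ^+ j < e)%R.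
  by apply: exists_expr_lt => //; rewrite q0 ltrBlDr ltrDl.
have := stay_out_muln_le _ _ q0 stay_b j s; have := reach_le_stay_out (j * b) s.
have := reach_le_le_reach k C (j * b) s; have := stay_out_ge0 (j * b) s.
case: (reach k C s) => [r||]//; case: (stay_out (j * b) s) => [q||]//;
  case: (reach_le k C (j * b) s) => [f||]//.
- by rewrite !lee_fin => _ ? [] ? /le_lt_trans/(_ je); lra.
- by move=> *; rewrite addye// leey.
Qed.

End avoidance.

Lemma decisive_of_unif_reach_le_ge d (T : measurableType d) (R : realType)
  (k : R.-pker T ~> T) (B : set T) b (delta : R) : measurable B -> (0 < delta)%R ->
  (forall y, delta%:E <= reach_le k (B `|` avoid_set k B) b y) -> decisive k B.
Proof.
move=> mB delta0 bdelta P.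
have mC : measurable (B `|` avoid_set k B).
  by apply: measurableU => //; exact: measurable_avoid_set.
transitivity (\int[P]_s (1 : \bar R)).
  by apply: eq_integral => s _; exact: (reach_eq1_of_unif_ge _ _ mC _ _ delta0 bdelta).
by rewrite integral_cst// mul1e; exact: probability_setT.
Qed.

Section location_graph.
Context {L : eqType} {Ed : finType} (src tgt : Ed -> L) (P : Ed -> Prop).

Definition strong_arc (l l' : L) := forall e, src e = l -> tgt e = l' -> P e.
Definition weak_arc : rel L := fun l l' => ~~ `[< strong_arc l l' >].

Lemma weak_arc_loc_arc l l' : weak_arc l l' -> loc_arc src tgt l l'.
Proof.
move=> /asboolPn ll'; apply/existsP; apply: contrapT => noe; apply: ll' => e el el'.
by exfalso; apply: noe; exists e; rewrite el el' !eqxx.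
Qed.

Hypothesis cycle_reset : cycle_reset_for src tgt P.

Lemma weak_path_not_cycle x p : p != [::] -> path weak_arc x p -> last x p != x.
Proof.
move=> p0 xp; apply/eqP => px.
have [i ip strong_i] := cycle_reset x p p0 (sub_path weak_arc_loc_arc xp) px.
by move/(pathP x): xp => /(_ i ip) /asboolPn; apply.
Qed.

Lemma weak_arc_last_notin x p y :
  path weak_arc x p -> weak_arc (last x p) y -> y \notin x :: p.
Proof.
move=> xp py; apply/negP; rewrite inE => /orP[/eqP yx|yp].
  suff : last x (rcons p x) != x by rewrite last_rcons eqxx.
  apply: weak_path_not_cycle; last by rewrite rcons_path xp -{2}yx py.
  by case: (p).
case/splitPr: yp xp py => p1 p2.
rewrite cat_path last_cat /= => /and3P[_ _ yp2] p2y.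
suff : last y (rcons p2 y) != y by rewrite last_rcons eqxx.
apply: weak_path_not_cycle; last by rewrite rcons_path yp2 p2y.
by case: (p2).
Qed.

End location_graph.

Lemma measure_fibers_ge d (L : measurableType d) d' (V : measurableType d')
  (R : realType) (m : {measure set (L * V) -> \bar R}) (S : L -> set V) (c : R) :
  (forall A : set L, measurable A) -> finite_set [set: L] ->
  (forall l, measurable (S l)) ->
  (forall l, c%:E * m ([set l] `*` [set: V]) <= m ([set l] `*` S l)) ->
  c%:E * m [set: L * V] <= m (\bigcup_l ([set l] `*` S l)).
Proof.
move=> measL finL mS cS.
have fibersE (S' : L -> set V) : (forall l, measurable (S' l)) ->
    m (\bigcup_l ([set l] `*` S' l)) = \sum_(l \in [set: L]) m ([set l] `*` S' l).
  move=> mS'; apply: measure_fin_bigcup => // [i j _ _ [[a b] [[/= <- _] [/= <-]]]//|l _].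
  exact: measurableX.
have -> : [set: L * V] = \bigcup_l ([set l] `*` [set: V]).
  by apply/seteqP; split => // -[l v] _; exists l.
rewrite !fibersE// ge0_mule_fsumr; last by move=> l; exact: measure_ge0.
exact: lee_fsum.
Qed.

Section stochastic_hybrid_system.
Context {R : realType} {dL : measure_display} {L : measurableType dL}
  {dV : measure_display} {V : measurableType dV} {Ed : finType}.
Variables (src tgt : Ed -> L) (gamma : L -> V -> R -> V)
  (mu : L * V -> probability R R) (w : L * V -> Ed -> R)
  (eta : Ed -> V -> probability V R) (kappa : R.-pker (L * V)%type ~> (L * V)%type).
Hypothesis measL : forall A : set L, measurable A.
Hypothesis finL : finite_set [set: L].
Hypothesis w_ge0 : forall s e, (0 <= w s e)%R.
Hypothesis kappaE : forall (s : L * V) (l' : L) (D : set V), measurable D ->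
  kappa s ([set l'] `*` D) =
  \int[mu s]_tau
     (\sum_(e : Ed | (src e == s.1) && (tgt e == l'))
         ((w (s.1, gamma s.1 s.2 tau) e)%:E * eta e (gamma s.1 s.2 tau) D)).

Definition strongly_reset (e : Ed) :=
  forall v v' (D : set V), measurable D -> eta e v D = eta e v' D.

Let weak := weak_arc src tgt strongly_reset.

Lemma kernel_strong_arc_ge (s : L * V) l (D : set V) (c : R) : measurable D ->
  strong_arc src tgt strongly_reset s.1 l -> (0 <= c)%R ->
  (forall e, src e = s.1 -> tgt e = l -> c%:E <= eta e point D) ->
  c%:E * kappa s ([set l] `*` [set: V]) <= kappa s ([set l] `*` D).
Proof.
move=> mD sl c0 etaD; rewrite !kappaE//.
have sum_ge0 (D' : set V) tau : 0 <= \sum_(e | (src e == s.1) && (tgt e == l))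
    ((w (s.1, gamma s.1 s.2 tau) e)%:E * eta e (gamma s.1 s.2 tau) D').
  by apply: sume_ge0 => e _; rewrite mule_ge0 ?lee_fin.
apply: le_trans (ge0_integralZl_le _ _ _ (sum_ge0 [set: V]) c0) _.
apply: ge0_le_integralT => [tau|tau]; first by rewrite mule_ge0 ?lee_fin.
rewrite ge0_sume_distrr => [|e _]; last by rewrite mule_ge0 ?lee_fin.
apply: lee_sum => e /andP[/eqP se /eqP te].
rewrite probability_setT mule1 muleC lee_wpmul2l ?lee_fin//.
by rewrite (sl e se te _ point)//; exact: etaD.
Qed.

Section level_sets.
Variable C : set (L * V).
Hypothesis mC : measurable C.
Hypothesis reach_le_C_gt0 : forall s, exists m, 0 < reach_le kappa C m s.

Definition reach_level (M : nat) (l : L) : set V :=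
  [set v | (M.+1%:R^-1)%:E <= reach_le kappa C M (l, v)].

Lemma measurable_reach_level M l : measurable (reach_level M l).
Proof.
rewrite -[X in measurable X]setTI; apply: emeasurable_fun_c_infty => //.
by apply: measurableT_comp; [exact: measurable_reach_le|exact: pair1_measurable].
Qed.

Lemma reach_level_nondecr l : {homo reach_level^~ l : M M' / (M <= M')%N >-> M `<=` M'}.
Proof.
move=> M M' MM' v; rewrite /reach_level/= => Mv.
apply: le_trans (reach_le_nondecr _ _ _ _ (l, v) MM'); apply: le_trans Mv.
by rewrite lee_fin lef_pV2 ?posrE// ler_nat ltnS.
Qed.

Lemma bigcup_reach_level l : \bigcup_M reach_level M l = [set: V].
Proof.
apply/seteqP; split => // v _.
have [m /exists_inv_succ_le[K Km]] := reach_le_C_gt0 (l, v).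
exists (maxn m K) => //; rewrite /reach_level/=.
apply: le_trans (reach_le_nondecr _ _ _ _ _ (leq_maxl m K)); apply: le_trans Km.
by rewrite lee_fin lef_pV2 ?posrE// ler_nat ltnS leq_maxr.
Qed.

Lemma exists_reset_level :
  exists M, forall e, (M.+1%:R^-1)%:E <= eta e point (reach_level M (tgt e)).
Proof.
apply: finite_forall_exists_nat => [e M M' MM'|e].
  move=> eM; have : ((M'.+1%:R^-1 : R)%:E <= (M.+1%:R^-1)%:E).
    by rewrite lee_fin lef_pV2 ?posrE// ler_nat ltnS.
  move/le_trans/(_ eM)/le_trans; apply; apply: le_measure; last exact: reach_level_nondecr.
  - by rewrite inE; exact: measurable_reach_level.
  - by rewrite inE; exact: measurable_reach_level.
apply: probability_cover_ge_inv => [M||].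
- exact: measurable_reach_level.
- exact: reach_level_nondecr.
- exact: bigcup_reach_level.
Qed.

Hypothesis cycle_reset : cycle_reset_for src tgt strongly_reset.

Section uniform_bound.
Variable M : nat.
Hypothesis reset_level : forall e, (M.+1%:R^-1)%:E <= eta e point (reach_level M (tgt e)).
Let eps : R := M.+1%:R^-1.

Lemma integral_reach_le_ge (s : L * V) (beta : R) K : (0 <= beta <= eps)%R -> (M <= K)%N ->
  (forall y, weak s.1 y.1 -> beta%:E <= reach_le kappa C K y) ->
  (beta * eps)%:E <= \int[kappa s]_y reach_le kappa C K y.
Proof.
move=> /andP[beta0 beta_eps] MK weak_ge.
have eps0 : (0 < eps)%R by rewrite invr_gt0.
have eps1 : (eps <= 1)%R by rewrite invf_le1// ler1n.
pose S l := if weak s.1 l then [set: V] else reach_level M l.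
have mS l : measurable (S l) by rewrite /S; case: ifP => // _; exact: measurable_reach_level.
have mass_S : eps%:E <= kappa s (\bigcup_l ([set l] `*` S l)).
  rewrite -[eps%:E]mule1 -(@prob_kernel _ _ _ _ _ kappa s).
  apply: measure_fibers_ge => // l; rewrite /S; case: ifPn => [_|/negPn/asboolP sl].
    by rewrite -[leRHS]mul1e lee_wpmul2r ?lee_fin.
  apply: kernel_strong_arc_ge => //; first exact: measurable_reach_level.
  - exact: ltW.
  - by move=> e _ <-; exact: reset_level.
have S_sub : \bigcup_l ([set l] `*` S l) `<=` [set y | beta%:E <= reach_le kappa C K y].
  move=> [l v] [l' _ [/= -> Sv]]; move: Sv; rewrite /S; case: ifPn => [wl _|_ Mv].
    exact: (weak_ge (l', v)).
  apply: le_trans (reach_le_nondecr _ _ _ _ _ MK); apply: le_trans Mv.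
  by rewrite lee_fin.
have := ge0_integral_ge_level (kappa s) beta0 (reach_le_ge0 kappa C K)
  (measurable_reach_le kappa C K mC).
apply: le_trans; rewrite EFinM lee_wpmul2l ?lee_fin//.
apply: le_trans mass_S _; apply: le_measure S_sub.
- by rewrite inE; apply: fin_bigcup_measurable => // l _; exact: measurableX.
- rewrite inE -[X in measurable X]setTI; apply: emeasurable_fun_c_infty => //.
  exact: measurable_reach_le.
Qed.

Variable N : nat.
Hypothesis uniq_size_le : forall q : seq L, uniq q -> (size q <= N)%N.

Lemma reach_le_weak_path_ge j x p : path weak x p -> uniq (x :: p) ->
  (N < size (x :: p) + j)%N ->
  forall s, s.1 = last x p -> (eps ^+ j.+1)%:E <= reach_le kappa C (j + M) s.
Proof.
have eps0 : (0 <= eps)%R by rewrite invr_ge0.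
have eps1 : (eps <= 1)%R by rewrite invf_le1// ler1n.
elim: j x p => [|j IH] x p xp uxp Nj s sx.
  by move: Nj; rewrite addn0 ltnNge uniq_size_le.
have [Cs|Cs] := pselect (C s).
  by rewrite reach_le_in// lee_fin exprn_ile1.
rewrite addSn reach_le_notin// exprSr; apply: integral_reach_le_ge.
- by rewrite exprn_ge0//= exprSr ler_piMl// exprn_ile1.
- exact: leq_addl.
move=> [l v] /= wl; apply: (IH x (rcons p l)).
- by rewrite rcons_path xp -sx.
- by rewrite -rcons_cons rcons_uniq uxp andbT (weak_arc_last_notin _ _ _ cycle_reset) -?sx.
- by rewrite /= size_rcons; move: Nj; rewrite /= !addSn addnS.
- by rewrite last_rcons.
Qed.

Lemma reach_le_unif_ge s : (eps ^+ N.+1)%:E <= reach_le kappa C (N + M) s.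
Proof. by apply: (@reach_le_weak_path_ge N s.1 [::]) => //=; rewrite add1n. Qed.

End uniform_bound.

Lemma exists_unif_reach_le_ge :
  exists b (delta : R), (0 < delta)%R /\ forall y, delta%:E <= reach_le kappa C b y.
Proof.
have [M reset_level] := exists_reset_level; have [N uniq_size_le] := finite_set_uniq_size finL.
exists (N + M)%N, (M.+1%:R^-1 ^+ N.+1)%R; split; first by rewrite exprn_gt0// invr_gt0.
exact: reach_le_unif_ge.
Qed.

End level_sets.
End stochastic_hybrid_system.

Arguments exists_unif_reach_le_ge {R dL L dV V Ed src tgt gamma mu w eta kappa}
  measL finL w_ge0 kappaE {C}.

Local Close Scope ereal_scope.

Theorem mainTheorem9 (R : realType) (n : nat)
  (dL : measure_display) (L : measurableType dL) (Ed : finType)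
  (src tgt : Ed -> L)
  (Inv : L -> set (n.-tuple R))
  (gamma : L -> n.-tuple R -> R -> n.-tuple R)
  (Gd : Ed -> set (n.-tuple R))
  (Rst : Ed -> n.-tuple R -> set (n.-tuple R))
  (mu : L * n.-tuple R -> probability R R)
  (w : L * n.-tuple R -> Ed -> R)
  (eta : Ed -> n.-tuple R -> probability (n.-tuple R) R)
  (kappa : R.-pker (L * n.-tuple R)%type ~> (L * n.-tuple R)%type) :
  (* L is a finite set of locations with the discrete sigma-algebra *)
  finite_set [set: L] ->
  (forall A : set L, measurable A) ->
  (* I(s) is nonempty and mu_s(I(s)) = 1 *)
  let I := fun s : L * n.-tuple R =>
    [set tau : R | 0 <= tau /\
       (forall t, 0 <= t <= tau -> Inv s.1 (gamma s.1 s.2 t)) /\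
       exists e, src e = s.1 /\ Gd e (gamma s.1 s.2 tau)] in
  (forall s, I s !=set0) ->
  (forall s, exists2 A, measurable A /\ A `<=` I s & mu s A = 1%E) ->
  (* w_s is a distribution on edges, positive exactly on the edges enabled in s *)
  (forall s e, 0 <= w s e) ->
  (forall s, \sum_(e : Ed) w s e = 1) ->
  (forall s e, 0 < w s e <-> (src e = s.1 /\ Gd e s.2)) ->
  (* eta_e(v)(R_e(v)) = 1 *)
  (forall e v, exists2 A, measurable A /\ A `<=` Rst e v & eta e v A = 1%E) ->
  (* kappa is the kernel of the STS T_H *)
  (forall (s : L * n.-tuple R) (l' : L) (D : set (n.-tuple R)), measurable D ->
     kappa s ([set l'] `*` D) =
     (\int[mu s]_tau
        (\sum_(e : Ed | (src e == s.1) && (tgt e == l'))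
            ((w (s.1, gamma s.1 s.2 tau) e)%:E * eta e (gamma s.1 s.2 tau) D)))%E) ->
  (* H is cycle-reset *)
  cycle_reset_for src tgt
    (fun e => forall v v' (D : set (n.-tuple R)), measurable D ->
                eta e v D = eta e v' D) ->
  forall B : set (L * n.-tuple R), measurable B -> decisive kappa B.
Proof.
(* Only the kernel equation matters: kappa is a probability kernel by its type. *)
move=> finL measL I _ _ w_ge0 _ _ _ kappaE cycle_reset B mB.
have mC : measurable (B `|` avoid_set kappa B).
  by apply: measurableU => //; exact: measurable_avoid_set.
have [b [delta [delta0 bdelta]]] := exists_unif_reach_le_ge measL finL w_ge0 kappaE
  mC (reach_le_avoid_set_gt0 kappa B) cycle_reset.
exact: decisive_of_unif_reach_le_ge mB delta0 bdelta.
Qed.
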